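(* Let $G=(V,E)$ be a finite simple graph which is $S_{1,1,5}$-free. Let $xy\in E$ and for $i\ge 1$ let $N_i=\{z\in V:\operatorname{dist}_G(z,\{x,y\})=i\}$. Assume $N_2=\{u_1,\dots,u_k\}$ is an independent set, and for each $i$ let $T_i$ be the set of vertices $t\in N_3$ whose only neighbor in $N_2$ is $u_i$. Then there is no induced path $(t_1,t_2,t_3,t_4,t_5)$ in $G[N_3]$ with $t_j\in T_{i_j}$ for five pairwise distinct indices $i_1,\dots,i_5$.
   Context: $S_{1,1,5}$ is the tree with a center $u$ adjacent to $a$, $b$ and $z_1$, where $u,z_1,\dots,z_5$ is an induced path, and no other edges. $\operatorname{dist}_G(z,\{x,y\})$ is the minimum of the distances from $z$ to $x$ and to $y$. *)

From mathcomp Require Import all_boot.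
Set Implicit Arguments. Unset Strict Implicit. Unset Printing Implicit Defensive.

(* A finite simple graph: vertex set a finType T, adjacency e : rel T,
   assumed symmetric and irreflexive in the theorem. *)

Definition induced_copy (T : finType) (e : rel T) (n : nat)
  (p : rel 'I_n) (f : 'I_n -> T) : Prop :=
  injective f /\ forall i j, e (f i) (f j) = p i j.

(* Pattern S_{1,1,5} on 'I_8: 0 = u (centre), 1 = a, 2 = b, 3..7 = z1..z5;
   edges u-a, u-b, u-z1, z_i - z_{i+1}. *)
Definition S115_edge0 (i j : nat) : bool :=
  [|| (i == 0) && (j == 1), (i == 0) && (j == 2), (i == 0) && (j == 3),
      (i == 3) && (j == 4), (i == 4) && (j == 5), (i == 5) && (j == 6)
    | (i == 6) && (j == 7)].
Definition S115 : rel 'I_8 :=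
  fun i j => S115_edge0 i j || S115_edge0 j i.

Definition S115_free (T : finType) (e : rel T) : Prop :=
  forall f : 'I_8 -> T, ~ induced_copy e S115 f.

Definition P5 : rel 'I_5 := fun i j => (i.+1 == j) || (j.+1 == i).

Definition dist_le (T : finType) (e : rel T) (x y z : T) (k : nat) : Prop :=
  exists a : T, exists p : seq T,
    (a = x \/ a = y) /\ path e a p /\ last a p = z /\ size p <= k.

Definition Nlayer (T : finType) (e : rel T) (x y : T) (i : nat) (z : T) : Prop :=
  dist_le e x y z i /\ ~ dist_le e x y z i.-1.

Definition Tset (T : finType) (e : rel T) (x y u t : T) : Prop :=
  Nlayer e x y 3 t /\
  (forall w, Nlayer e x y 2 w -> e t w -> w = u) /\ e t u.

(** The vertices u_i of N_2 are pairwise non-adjacent, t_i sees exactly u_i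
    among them, and u_0 has a neighbour w in N_1, itself adjacent to an end r
    of the edge xy; by the layering, w sees no t_i and r sees no t_i, u_i.
    If w sees u_4, then w with leaves r, u_4 and arm u_0 t_0 t_1 t_2 t_3 is an
    S_{1,1,5}.  Otherwise w must see u_3, u_2 and u_1, since a missing edge
    yields an S_{1,1,5} centred at t_3, t_2 or t_1 whose arm runs back through
    u_0 (or u_3) and w; and then w with leaves u_0, u_1 and arm
    u_2 t_2 t_3 t_4 u_4 is an S_{1,1,5}. *)

From mathcomp Require Import all_boot.
Set Implicit Arguments. Unset Strict Implicit. Unset Printing Implicit Defensive.

Section Layers.
Variables (T : finType) (e : rel T) (x y : T).

Lemma dist_le_rcons z v k : dist_le e x y z k -> e z v -> dist_le e x y v k.+1.
Proof.
case=> a [p [Ha [Hp [Hl Hs]]]] Hzv; exists a, (rcons p v); split=> //.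
by rewrite rcons_path Hp Hl Hzv last_rcons size_rcons.
Qed.

Lemma dist_le_leq z k m : dist_le e x y z k -> k <= m -> dist_le e x y z m.
Proof.
case=> a [p [Ha [Hp [Hl Hs]]]] Hkm; exists a, p; do !split=> //.
exact: leq_trans Hs Hkm.
Qed.

Lemma dist_le_Nlayer_nadj i j z v :
  dist_le e x y z i -> Nlayer e x y j v -> i.+1 < j -> e z v = false.
Proof.
move=> Hz [_ Hv] Hij; apply/negP=> Hzv; apply: Hv.
by apply: dist_le_leq (dist_le_rcons Hz Hzv) _; case: j Hij.
Qed.

Lemma Nlayer2_parent u : Nlayer e x y 2 u ->
  exists r w, [/\ dist_le e x y r 0, e r w & e w u].
Proof.
case=> [[a [p [Ha [Hp [Hl Hs]]]]] Hu1].
case: p Hp Hl Hs => [|v [|v' [|//]]] /= Hp Hl Hs.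
- by case: Hu1; exists a, [::].
- by case: Hu1; exists a, [:: v].
- case/and3P: Hp => Hav Hvu _; subst v'.
  by exists a, v; split=> //; exists a, [::].
Qed.

Lemma Tset_adjE u t v : Tset e x y u t -> Nlayer e x y 2 v -> e t v = (v == u).
Proof. by case=> _ [Huniq Htu] Hv; apply/idP/eqP => [/(Huniq _ Hv)|->//]. Qed.

End Layers.

Lemma S115_twins (i j : 'I_8) :
  S115 i =1 S115 j -> i = j \/ [/\ i != j, (i : nat) \in [:: 1; 2] & (j : nat) \in [:: 1; 2]].
Proof.
case: i j => [[|[|[|[|[|[|[|[|//]]]]]]]] ?] [[|[|[|[|[|[|[|[|//]]]]]]]] ?] Hk;
  first [ by left; apply: val_inj | by right; split
        | by have := Hk (@Ordinal 8 0 isT) | by have := Hk (@Ordinal 8 1 isT)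
        | by have := Hk (@Ordinal 8 2 isT) | by have := Hk (@Ordinal 8 3 isT)
        | by have := Hk (@Ordinal 8 4 isT) | by have := Hk (@Ordinal 8 5 isT)
        | by have := Hk (@Ordinal 8 6 isT) | by have := Hk (@Ordinal 8 7 isT) ].
Qed.

Definition spider (T : Type) (c a b z1 z2 z3 z4 z5 : T) (i : 'I_8) : T :=
  nth c [:: c; a; b; z1; z2; z3; z4; z5] i.

Lemma induced_copy_spider (T : finType) (e : rel T) (eirr : irreflexive e)
    (c a b z1 z2 z3 z4 z5 : T) : a != b ->
  (forall i j, e (spider c a b z1 z2 z3 z4 z5 i) (spider c a b z1 z2 z3 z4 z5 j) = S115 i j) ->
  induced_copy e S115 (spider c a b z1 z2 z3 z4 z5).
Proof.
move=> Hab Hf; split=> // i j Hij.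
have Hk : S115 i =1 S115 j by move=> k; rewrite -!Hf Hij.
case: (S115_twins Hk) => [//|[Hne Hi Hj]].
rewrite !inE in Hi Hj; move: Hne Hij; rewrite -val_eqE /spider /=.
by case/orP: Hi => /eqP->; case/orP: Hj => /eqP-> //= _ Hab'; rewrite Hab' eqxx in Hab.
Qed.

Local Notation o k := (@Ordinal 5 k isT).

Section Configuration.
Variables (T : finType) (e : rel T).
Hypotheses (esym : symmetric e) (eirr : irreflexive e) (Hfree : S115_free e).
Variables (t u : 'I_5 -> T) (r w : T).
Hypotheses (ett : forall i j, e (t i) (t j) = P5 i j)
  (etu : forall i j, e (t i) (u j) = (i == j))
  (euu : forall i j, e (u i) (u j) = false)
  (ewt : forall i, e w (t i) = false)
  (ert : forall i, e r (t i) = false)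
  (eru : forall i, e r (u i) = false)
  (erw : e r w) (ewu0 : e w (u (o 0))).

Let config_facts := (ett, etu, euu, ewt, ert, eru, erw, ewu0, eirr).

Local Ltac check_spider extra :=
  move=> [[|[|[|[|[|[|[|[|//]]]]]]]] ?] [[|[|[|[|[|[|[|[|//]]]]]]]] ?];
  rewrite /spider /=;
  first [ by rewrite ?config_facts ?extra | by rewrite esym ?config_facts ?extra ].

Lemma etu_diag i : e (t i) (u i).
Proof. by rewrite etu eqxx. Qed.

Lemma w_adj_u3 : e w (u (o 3)).
Proof.
apply: contraT => /negbTE ewu3; exfalso.
apply: (Hfree (f := spider (t (o 3)) (t (o 4)) (u (o 3))
  (t (o 2)) (t (o 1)) (t (o 0)) (u (o 0)) w)); apply: induced_copy_spider => //.
  by apply: contraTneq (etu_diag (o 4)) => ->; rewrite euu.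
by check_spider ewu3.
Qed.

Lemma w_adj_u2 : e w (u (o 2)).
Proof.
apply: contraT => /negbTE ewu2; exfalso.
apply: (Hfree (f := spider (t (o 2)) (t (o 3)) (u (o 2))
  (t (o 1)) (t (o 0)) (u (o 0)) w r)); apply: induced_copy_spider => //.
  by apply: contraTneq (etu_diag (o 3)) => ->; rewrite euu.
by check_spider ewu2.
Qed.

Lemma w_adj_u1 : e w (u (o 1)).
Proof.
apply: contraT => /negbTE ewu1; exfalso.
apply: (Hfree (f := spider (t (o 1)) (t (o 0)) (u (o 1))
  (t (o 2)) (t (o 3)) (u (o 3)) w r)); apply: induced_copy_spider => //.
  by apply: contraTneq (etu_diag (o 0)) => ->; rewrite euu.
by check_spider (ewu1, w_adj_u3).
Qed.

Lemma w_nadj_u4 : e w (u (o 4)) = false.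
Proof.
apply/negbTE/negP => ewu4.
apply: (Hfree (f := spider w r (u (o 4))
  (u (o 0)) (t (o 0)) (t (o 1)) (t (o 2)) (t (o 3)))); apply: induced_copy_spider => //.
  by apply: contraTneq (etu_diag (o 4)) => <-; rewrite esym ert.
by check_spider ewu4.
Qed.

Lemma configuration_contra : False.
Proof.
apply: (Hfree (f := spider w (u (o 0)) (u (o 1))
  (u (o 2)) (t (o 2)) (t (o 3)) (t (o 4)) (u (o 4)))); apply: induced_copy_spider => //.
  by apply: contraTneq (etu_diag (o 0)) => ->; rewrite etu.
by check_spider (w_adj_u1, w_adj_u2, w_nadj_u4).
Qed.

End Configuration.

Theorem lemma12 (T : finType) (e : rel T)
  (esym : symmetric e) (eirr : irreflexive e)
  (Hfree : S115_free e) (x y : T) (Hxy : e x y)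
  (HN2ind : forall v w, Nlayer e x y 2 v -> Nlayer e x y 2 w -> ~~ e v w) :
  ~ exists (t : 'I_5 -> T) (u : 'I_5 -> T),
      induced_copy e P5 t /\
      injective u /\
      (forall j, Nlayer e x y 2 (u j)) /\
      (forall j, Tset e x y (u j) (t j)).
Proof.
case=> t [u [[_ ett] [uinj [Nu Tt]]]].
have euu i j : e (u i) (u j) = false by apply/negbTE/HN2ind.
have etu i j : e (t i) (u j) = (i == j).
  by rewrite (Tset_adjE (Tt i) (Nu j)) (inj_eq uinj) eq_sym.
have [r [w [Hr erw ewu0]]] := Nlayer2_parent (Nu (o 0)).
have Hw : dist_le e x y w 1 := dist_le_rcons Hr erw.
apply: (configuration_contra esym eirr Hfree ett etu euu (r := r) (w := w)) => // i.
- exact: dist_le_Nlayer_nadj Hw (Tt i).1 _.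
- exact: dist_le_Nlayer_nadj Hr (Tt i).1 _.
- exact: dist_le_Nlayer_nadj Hr (Nu i) _.
Qed.
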